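(* Let $N\in\mathbb{N}$ with $N\ge3$, $0\le r\le N+1$ and $0\le\ell\le 2N+2$ integers. Then \[ \mathcal{M}_{2r,2\ell}\le\begin{cases}\frac{0.2^\ell}{1.3^{2r}}&\text{if }\ell\ge1,\\[2pt] \frac{0.7}{1.3^{2r}}&\text{if }\ell=0.\end{cases} \]
   Context: $n_N:=\left(\frac{3(3N+4)\log(6N+8)}{1.3^2}\right)^4$ (natural log), and for $r,\ell\in\mathbb{N}_0$ with $\ell$ even, $\mathcal{M}_{r,\ell}:=\sup\left\{\frac{1.4^\ell}{1.3^r}\Gamma\left(\frac{\ell+1}{2}\right)n^{\frac\ell8-\frac r4+\frac{N+2}{2}}e^{-1.3^2n^{1/4}}:\ n\ge n_N\right\}$. *)

From HB Require Import structures.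
From mathcomp Require Import all_boot all_order all_algebra.
From mathcomp Require Import all_classical all_reals all_analysis.
Set Implicit Arguments. Unset Strict Implicit. Unset Printing Implicit Defensive.
Import Order.TTheory GRing.Theory Num.Theory.
Local Open Scope classical_set_scope.
Local Open Scope ring_scope.

Definition Gamma {R : realType} (x : R) : R :=
  fine (\int[@lebesgue_measure R]_(t in `]0%R, +oo[) ((t `^ (x - 1)) * expR (- t))%:E)%E.

Definition nN {R : realType} (N : nat) : R :=
  ((3 * (3 * N%:R + 4) * ln (6 * N%:R + 8)) / (13 / 10) ^+ 2) ^+ 4.

Definition Mterm {R : realType} (N r l : nat) (n : R) : R :=
  (7 / 5) ^+ l / (13 / 10) ^+ r * Gamma ((l%:R + 1) / 2)
  * n `^ (l%:R / 8 - r%:R / 4 + (N%:R + 2) / 2)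
  * expR (- ((13 / 10) ^+ 2 * n `^ (1 / 4))).

Definition M {R : realType} (N r l : nat) : \bar R :=
  ereal_sup [set (Mterm N r l n)%:E | n in [set n : R | nN N <= n]].

From HB Require Import structures.
From mathcomp Require Import all_boot all_order all_algebra.
From mathcomp Require Import all_classical all_reals all_analysis.
From mathcomp Require Import measurable_realfun exponential_distribution.
From mathcomp Require Import ring lra.
Import Order.TTheory GRing.Theory Num.Theory.
Local Open Scope ring_scope.
Local Open Scope classical_set_scope.

(* With u = ln n / 4 and a = l - 2r + 2N + 4 >= 0, the quantity inside the supremum is
   C * Gamma (l + 1/2) * exp (a u - 1.3^2 e^u).  For n >= n_N we have e^u >= m := n_N^(1/4),
   and 1.3^2 m = 3 (3N+4) ln (6N+8) >= a, so u |-> a u - 1.3^2 e^u is nonincreasing there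
   (e^u lies above its tangent at u = ln m); the supremum is therefore at most its value at
   u = ln m, which is exp (-Theta (N ln N)).  Gamma (l + 1/2) <= 4 + 2^(l+1) l! by splitting the
   integral at 1: on ]0,1] the integrand is below t^(-1/2), whose integral is at most 4 by a
   4-adic decomposition of ]0,1], and on ]1,+oo[ it is below 2^(l+1) l! times the exponential
   density of rate 1/2.  Elementary bounds on exp and ln finish the estimate. *)

Section powRN_half_integral.
Context {R : realType}.
Local Notation mu := (@lebesgue_measure R).

Definition quarter (k : nat) : R := 4^-1 ^+ k.

Lemma quarter_gt0 k : 0 < quarter k.
Proof. by rewrite exprn_gt0. Qed.

Lemma quarterS k : quarter k.+1 = quarter k / 4.
Proof. by rewrite /quarter exprSr. Qed.

Lemma quarter_le_inv k : quarter k <= k.+1%:R^-1.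
Proof.
rewrite /quarter exprVn lef_pV2 ?posrE ?exprn_gt0 ?ltr0n// -natrX ler_nat.
exact: ltn_expl.
Qed.

Lemma quarterE k : quarter k = (2^-1 ^+ k) ^+ 2.
Proof.
rewrite /quarter (_ : 4^-1 = 2^-1 ^+ 2); last by rewrite expr2; lra.
by rewrite -exprM mulnC exprM.
Qed.

Lemma sqrt_quarter k : Num.sqrt (quarter k) = 2^-1 ^+ k.
Proof. by rewrite quarterE sqrtr_sqr ger0_norm// exprn_ge0. Qed.

Definition quarter_itv (k : nat) : set R := `](quarter k.+1), (quarter k)].

Lemma bigcup_quarter_itv : \bigcup_k quarter_itv k = `]0%R, 1%R].
Proof.
apply/seteqP; split=> [t [k _]|t].
  rewrite /quarter_itv/= !in_itv/= => /andP[qt tq].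
  have qk_le1 : quarter k <= 1 by apply: exprn_ile1; lra.
  by rewrite (lt_trans (quarter_gt0 _) qt) (le_trans tq).
rewrite /= in_itv/= => /andP[t0 t1].
have ex_qk_lt_t : exists k, quarter k < t.
  exists (Num.truncn t^-1); apply: le_lt_trans (quarter_le_inv _) _.
  by rewrite -[ltRHS]invrK ltf_pV2 ?posrE ?invr_gt0 ?ltr0n// truncnS_gt.
case: (ex_minnP ex_qk_lt_t) => -[|m]; first by rewrite /quarter expr0; lra.
move=> qm_lt_t m_min; exists m => //; rewrite /quarter_itv/= in_itv/= qm_lt_t/= leNgt.
by apply/negP => /m_min; rewrite ltnn.
Qed.

Lemma trivIset_quarter_itv : trivIset setT quarter_itv.
Proof.
apply/trivIsetP => i j _ _ ij.
wlog lt_ij : i j ij / (i < j)%N.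
  move=> wlog_ij; have [|lt_ji|eq_ij] := ltngtP i j; first exact: wlog_ij.
    by rewrite setIC; apply: wlog_ij; rewrite // eq_sym.
  by rewrite eq_ij eqxx in ij.
have qj_le_qi1 : quarter j <= quarter i.+1 by apply: ler_wiXn2l => //; lra.
apply/seteqP; split=> // t [].
rewrite /quarter_itv/= !in_itv/= => /andP[+ _] /andP[_ +]; lra.
Qed.

Lemma powRN_half_le_quarter_itv k t :
  quarter_itv k t -> t `^ (- 2^-1) <= 2 ^+ k.+1.
Proof.
rewrite /quarter_itv/= in_itv/= => /andP[qt _].
have t_gt0 : 0 < t := lt_trans (quarter_gt0 _) qt.
have : 2^-1 ^+ k.+1 <= Num.sqrt t by rewrite -sqrt_quarter ler_sqrt ?ltW.
rewrite powRN powR12_sqrt ?(ltW t_gt0)// -[2 ^+ _]invrK -exprVn.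
by rewrite lef_pV2 ?posrE ?sqrtr_gt0 ?exprn_gt0 ?invr_gt0.
Qed.

Lemma measurable_powR_EFin (p : R) (D : set R) :
  measurable D -> measurable_fun D (fun t => (t `^ p)%:E).
Proof. by move=> mD; apply/measurable_EFinP/measurable_funTS; exact: measurable_powR. Qed.

Lemma integral_quarter_itv_le k :
  (\int[mu]_(t in quarter_itv k) (t `^ (- 2^-1))%:E <= (4 / (2 ^ (k + 1))%:R)%:E)%E.
Proof.
have mI : measurable (quarter_itv k) by exact: measurable_itv.
apply: (@le_trans _ _ (\int[mu]_(t in quarter_itv k) (2 ^+ k.+1)%:E)%E).
  apply: ge0_le_integral => //; first by move=> t _; rewrite lee_fin powR_ge0.
    exact: measurable_powR_EFin.
  by move=> t /powRN_half_le_quarter_itv; rewrite lee_fin.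
have qk_gt0 := quarter_gt0 k.
have mu_I : mu (quarter_itv k) = (quarter k - quarter k.+1)%:E.
  by rewrite lebesgue_measure_itv/= lte_fin ifT ?EFinD// quarterS; lra.
rewrite integral_cst// (_ : _ (quarter_itv k) = (quarter k - quarter k.+1)%:E) //.
rewrite -EFinM lee_fin addn1 natrX quarterS.
rewrite quarterE exprVn exprS invfM.
have : 0 < 2 ^+ k :> R by rewrite exprn_gt0.
set p := 2 ^+ k => p_gt0.
have -> : 2 * p * (p^-1 ^+ 2 - p^-1 ^+ 2 / 4) = 3 / 2 * p^-1 by field; rewrite gt_eqF.
by have := p_gt0; rewrite -invr_gt0; lra.
Qed.

Lemma integral_powRN_half_itv01_le :
  (\int[mu]_(t in `]0%R, 1%R]) (t `^ (- 2^-1))%:E <= 4%:E)%E.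
Proof.
rewrite -bigcup_quarter_itv ge0_integral_bigcup//; first last.
- exact: trivIset_quarter_itv.
- by move=> t _; rewrite lee_fin powR_ge0.
- by apply: measurable_powR_EFin; apply: bigcup_measurable => k _; exact: measurable_itv.
- by move=> k; exact: measurable_itv.
apply: (@le_trans _ _ (\sum_(0 <= k <oo) (4 / (2 ^ (k + 1))%:R)%:E)%E).
  apply: lee_nneseries => [k _ _|k _]; last exact: integral_quarter_itv_le.
  by apply: integral_ge0 => t _; rewrite lee_fin powR_ge0.
have := @cvg_geometric_eseries_half R 4 0.
by move/cvg_lim; rewrite expr0 divr1 => <-.
Qed.

End powRN_half_integral.

Section Gamma_bound.
Context {R : realType}.
Local Notation mu := (@lebesgue_measure R).

Lemma exprn_le_fact_expR (l : nat) (y : R) : 0 <= y -> y ^+ l <= l`!%:R * expR y.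
Proof.
case: l => [|l] y_ge0; first by rewrite fact0 mul1r; have := expR_ge1Dx y; lra.
have fact_gt0 : 0 < l.+1`!%:R :> R by rewrite ltr0n fact_gt0.
rewrite mulrC -ler_pdivrMr//; have := expR_ge1Dxn l y_ge0; lra.
Qed.

Lemma powR_expRN_le_itv01 (l : nat) (t : R) : 0 < t <= 1 ->
  t `^ (l%:R - 2^-1) * expR (- t) <= t `^ (- 2^-1).
Proof.
move=> /andP[t_gt0 t_le1].
apply: le_trans (ler_piMr (powR_ge0 _ _) _) _; first by rewrite expR_le1; lra.
by apply: ger_powR; rewrite ?t_gt0//; have := ler0n R l; lra.
Qed.

Lemma powR_expRN_le_exponential_pdf (l : nat) (t : R) : 1 < t ->
  t `^ (l%:R - 2^-1) * expR (- t) <= 2 ^+ l.+1 * l`!%:R * exponential_pdf 2^-1 t.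
Proof.
move=> t_gt1; rewrite exponential_pdfE; last lra.
rewrite (_ : - 2^-1 * t = - (t / 2)); last lra.
have t_pow_le : t `^ (l%:R - 2^-1) <= 2 ^+ l * (l`!%:R * expR (t / 2)).
  apply: le_trans (_ : t ^+ l <= _).
    by rewrite -powR_mulrn; [apply: ler_powR|]; lra.
  rewrite -[t in t ^+ l](@divfK _ 2)// mulrC exprMn ler_wpM2l ?exprn_ge0//.
  by apply: exprn_le_fact_expR; lra.
have expRN_half : expR (- t) = expR (- (t / 2)) * expR (- (t / 2)).
  by rewrite -expRD; congr expR; lra.
have expR_half : expR (t / 2) * expR (- (t / 2)) = 1 by rewrite -expRD subrr expR0.
have -> : 2 ^+ l.+1 * l`!%:R * (2^-1 * expR (- (t / 2))) =
          2 ^+ l * l`!%:R * expR (- (t / 2)) by rewrite exprS; field.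
rewrite expRN_half mulrA.
apply: ler_wpM2r; first exact: expR_ge0.
apply: le_trans (ler_wpM2r (expR_ge0 _) t_pow_le) _.
by rewrite -!mulrA expR_half mulr1.
Qed.

Lemma measurable_powR_expRN (p : R) (D : set R) :
  measurable D -> measurable_fun D (fun t => (t `^ p * expR (- t))%:E).
Proof.
move=> mD; apply/measurable_EFinP/measurable_funTS.
apply: measurable_funM; first exact: measurable_powR.
by apply: measurableT_comp; [exact: measurable_expR|exact: oppr_measurable].
Qed.

Lemma integral_itv01_powR_expRN_le (l : nat) :
  (\int[mu]_(t in `]0%R, 1%R]) (t `^ (l%:R - 2^-1) * expR (- t))%:E <= 4%:E)%E.
Proof.
apply: le_trans integral_powRN_half_itv01_le.
apply: ge0_le_integral => //.
- by move=> t _; rewrite lee_fin mulr_ge0 ?powR_ge0 ?expR_ge0.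
- exact: measurable_powR_expRN.
- exact: measurable_powR_EFin.
- by move=> t; rewrite /= in_itv/= lee_fin; exact: powR_expRN_le_itv01.
Qed.

Lemma integral_itv1y_powR_expRN_le (l : nat) :
  (\int[mu]_(t in `]1%R, +oo[) (t `^ (l%:R - 2^-1) * expR (- t))%:E <=
    (2 ^+ l.+1 * l`!%:R)%:E)%E.
Proof.
set c : R := 2 ^+ l.+1 * l`!%:R.
have c_ge0 : 0 <= c by rewrite mulr_ge0 ?exprn_ge0.
have pdf_ge0 t : (0 <= (exponential_pdf 2^-1 t)%:E)%E.
  by rewrite lee_fin exponential_pdf_ge0.
have mpdf : measurable_fun setT (fun t : R => (exponential_pdf 2^-1 t)%:E).
  by apply/measurable_EFinP; exact: measurable_exponential_pdf.
apply: (@le_trans _ _ (\int[mu]_(t in `]1%R, +oo[) (c%:E * (exponential_pdf 2^-1 t)%:E))%E).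
  apply: ge0_le_integral => //.
  - by move=> t _; rewrite lee_fin mulr_ge0 ?powR_ge0 ?expR_ge0.
  - exact: measurable_powR_expRN.
  - by apply: measurable_funeM; exact: measurable_funS mpdf.
  - move=> t; rewrite /= in_itv/= andbT -EFinM lee_fin.
    exact: powR_expRN_le_exponential_pdf.
rewrite ge0_integralZl_EFin//; last exact: measurable_funS mpdf.
rewrite -[leRHS]mule1; apply: lee_wpmul2l; first by rewrite lee_fin.
rewrite -(@integral_exponential_pdf _ 2^-1) ?invr_gt0//.
by apply: ge0_subset_integral.
Qed.

Lemma Gamma_ge0 (x : R) : 0 <= Gamma x.
Proof.
by apply/fine_ge0/integral_ge0 => t _; rewrite lee_fin mulr_ge0 ?powR_ge0 ?expR_ge0.
Qed.

Lemma fine_le_EFin (x : \bar R) (b : R) : (0 <= x)%E -> (x <= b%:E)%E -> fine x <= b.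
Proof. by case: x. Qed.

Lemma Gamma_half_le (l : nat) : Gamma (l%:R + 2^-1 : R) <= 4 + 2 ^+ l.+1 * l`!%:R.
Proof.
rewrite /Gamma (_ : l%:R + 2^-1 - 1 = l%:R - 2^-1 :> R); last lra.
have f_ge0 t : (0 <= (t `^ (l%:R - 2^-1) * expR (- t))%:E)%E.
  by rewrite lee_fin mulr_ge0 ?powR_ge0 ?expR_ge0.
apply: fine_le_EFin; first by apply: integral_ge0 => t _; exact: f_ge0.
rewrite (_ : `]0, +oo[ = `]0, 1] `|` `]1, +oo[); last first.
  by apply: itv_bndbnd_setU; rewrite bnd_simp.
have disj_itv : [disjoint `]0, 1] & `]1, +oo[ : set R]%classic.
  by apply/disj_setPS => t []; rewrite /= !in_itv/= => /andP[_ +] /andP[+ _]; lra.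
rewrite ge0_integral_setU//=; last by apply: measurable_powR_expRN; exact: measurableU.
by rewrite EFinD leeD// ?integral_itv01_powR_expRN_le ?integral_itv1y_powR_expRN_le.
Qed.

End Gamma_bound.

Lemma fact_leq_expn (l k : nat) : (l <= k)%N -> (l`! <= k ^ l)%N.
Proof. by elim: l => // l IHl lt_lk; rewrite factS expnS leq_mul// IHl// ltnW. Qed.

Section numeric_bounds.
Context {R : realType}.

Lemma expR_ge_pow1Dx (x : R) (n : nat) :
  - n.+1%:R <= x -> (1 + x / n.+1%:R) ^+ n.+1 <= expR x.
Proof.
move=> x_ge.
have n1_gt0 : 0 < n.+1%:R :> R by rewrite ltr0n.
rewrite -[in leRHS](divfK (lt0r_neq0 n1_gt0) x) [x / _ * _]mulrC expRM_natl.
apply: lerXn2r; rewrite ?nnegrE ?expR_ge0 ?expR_ge1Dx//.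
by rewrite -lerBlDl sub0r ler_pdivlMr// mulN1r.
Qed.

Lemma expR34_ge2 : 2 <= expR (3 / 4 : R).
Proof.
have /(_ ltac:(lra)) := @expR_ge_pow1Dx (3 / 4) 4.
by rewrite !exprS expr0; lra.
Qed.

Lemma expR32_ge4 : 4 <= expR (3 / 2 : R).
Proof.
rewrite (_ : 3 / 2 = 2%:R * (3 / 4)); last lra.
rewrite expRM_natl [leLHS](_ : _ = 2 ^+ 2); last by rewrite expr2; lra.
by apply: lerXn2r; rewrite ?nnegrE ?expR_ge0 ?expR34_ge2.
Qed.

Lemma expR2_ge98_15 : 98 / 15 <= expR (2 : R).
Proof.
have /(_ ltac:(lra)) := @expR_ge_pow1Dx 2 14.
by rewrite !exprS expr0; lra.
Qed.

Lemma expR114_le26 : expR (11 / 4 : R) <= 26.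
Proof.
have expR_quarter : expR (4^-1 : R) <= 4 / 3.
  rewrite -[leRHS]invf_div -[leLHS]invrK -expRN lef_pV2 ?posrE ?expR_gt0 ?divr_gt0//.
  by have := expR_ge1Dx (- 4^-1 : R); lra.
rewrite expRM_natl; apply: le_trans (lerXn2r _ _ _ expR_quarter) _.
- by rewrite nnegrE expR_ge0.
- by rewrite nnegrE; lra.
- by rewrite !exprS expr0; lra.
Qed.

Lemma ln_le_half (y : R) : 0 < y -> ln y <= y / 2 - 4^-1.
Proof.
move=> y_gt0; have two_neq0 : 2 != 0 :> R by [].
rewrite -[in ln y](divfK two_neq0 y) lnM ?posrE ?divr_gt0//.
have := @le_ln1Dx R (y / 2 - 1); rewrite (addrC 1) subrK => /(_ ltac:(lra)).
have : ln 2 <= 3 / 4 :> R by rewrite -ler_expR lnK ?posrE ?expR34_ge2.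
lra.
Qed.

Lemma gt0_powRE (a x : R) : 0 < a -> a `^ x = expR (x * ln a).
Proof. by move=> a_gt0; rewrite /powR gt_eqF. Qed.

Lemma linear_sub_expR_le (a K m u : R) : 0 < m -> 0 <= a <= K * m -> ln m <= u ->
  a * u - K * expR u <= a * ln m - K * m.
Proof.
move=> m_gt0 /andP[a_ge0 a_le] ln_m_le.
have K_ge0 : 0 <= K by rewrite -(pmulr_lge0 _ m_gt0) (le_trans a_ge0).
have expR_ge : m * (1 + (u - ln m)) <= expR u.
  rewrite -[in leRHS](subrK (ln m) u) expRD lnK ?posrE// mulrC.
  by apply: ler_wpM2r; [exact: ltW|exact: expR_ge1Dx].
have := ler_wpM2l K_ge0 expR_ge.
have : a * (u - ln m) <= K * m * (u - ln m) by rewrite ler_wpM2r// subr_ge0.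
nra.
Qed.

End numeric_bounds.

Section Mterm_bound.
Context {R : realType} (N r l : nat).
Hypotheses (N_ge3 : (3 <= N)%N) (r_le : (r <= N + 1)%N) (l_le : (l <= 2 * N + 2)%N).

Local Notation L := (ln (6 * N%:R + 8) : R).
Local Notation a := (l%:R - 2 * r%:R + 2 * N%:R + 4 : R).
(* The exponent at n = n_N, with ln (n_N^(1/4)) replaced by its upper bound 244/169 L - 1/4. *)
Local Notation E := (a * (244 / 169 * L - 4^-1) - (9 * N%:R + 12) * L).

Let N_ge3R : 3 <= N%:R :> R. Proof. by rewrite (ler_nat R 3). Qed.
Let r_leR : r%:R <= N%:R + 1 :> R. Proof. by rewrite -[1]/(1%:R) -natrD ler_nat. Qed.
Let l_leR : l%:R <= 2 * N%:R + 2 :> R.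
Proof. by rewrite -[2]/(2%:R) -natrM -natrD ler_nat. Qed.
Let l_ge0 : 0 <= l%:R :> R. Proof. exact: ler0n. Qed.

Let L_ge : 11 / 4 <= L.
Proof.
have N3 := N_ge3R.
rewrite -ler_expR lnK ?posrE; last lra.
by apply: le_trans expR114_le26 _; lra.
Qed.

Let a_ge0 : 0 <= a. Proof. by have := r_leR; have := l_ge0; lra. Qed.

Let a_le : a <= l%:R + 2 * N%:R + 4. Proof. by have := ler0n R r; lra. Qed.

Lemma exponent_le : E <= - (3 / 2 + l%:R * (2 + L)).
Proof.
have N3 := N_ge3R; have L11 := L_ge; have lN := l_leR; have l0 := l_ge0.
have rN := r_leR; have a0 := a_ge0; set K := 244 / 169 * L - 4^-1.
have K_ge0 : 0 <= K by rewrite /K; lra.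
have : a * K <= (l%:R + 2 * N%:R + 4) * K by apply: ler_wpM2r => //; exact: a_le.
have : l%:R * (2 + L + K) <= (2 * N%:R + 2) * (2 + L + K).
  by apply: ler_wpM2r => //; lra.
have : 0 <= (N%:R - 3) * (L - 11 / 4) by apply: mulr_ge0; lra.
rewrite /K; nra.
Qed.

Lemma exponent0_le : l = 0 -> E <= - L.
Proof.
move=> l0; have N3 := N_ge3R; have L11 := L_ge; have rN := r_leR.
have a0 := a_ge0; set K := 244 / 169 * L - 4^-1.
have K_ge0 : 0 <= K by rewrite /K; lra.
have : a * K <= (2 * N%:R + 4) * K.
  by apply: ler_wpM2r => //; have := a_le; rewrite l0; lra.
have : 0 <= (N%:R - 3) * (L - 11 / 4) by apply: mulr_ge0; lra.
rewrite /K; nra.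
Qed.

Lemma Mterm_le_expR (n : R) : nN N <= n ->
  Mterm N (2 * r) (2 * l) n <=
    (7 / 5) ^+ (2 * l) * Gamma (l%:R + 2^-1) * expR E / (13 / 10) ^+ (2 * r).
Proof.
have N3 := N_ge3R; have L11 := L_ge.
set m : R := 3 * (3 * N%:R + 4) * L / (13 / 10) ^+ 2.
have m_gt0 : 0 < m by rewrite /m; apply: divr_gt0; [apply: mulr_gt0|]; lra.
(* [nN N] unfolds to [m ^+ 4]. *)
move=> m4_le_n; have n_gt0 : 0 < n by apply: lt_le_trans m4_le_n; exact: exprn_gt0.
have ln_m_le_u : ln m <= ln n / 4.
  by move: m4_le_n; rewrite -ler_ln ?posrE ?exprn_gt0// lnXn//; lra.
have ln_m_le : ln m <= 244 / 169 * L - 4^-1.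
  have -> : m = 150 / 169 * L * (6 * N%:R + 8) by rewrite /m; field.
  rewrite lnM ?posrE; [|lra|lra].
  by have := @ln_le_half R (150 / 169 * L) ltac:(lra); lra.
have Km : (13 / 10) ^+ 2 * m = (9 * N%:R + 12) * L by rewrite /m; field.
have MtermE : Mterm N (2 * r) (2 * l) n = (7 / 5) ^+ (2 * l) * Gamma (l%:R + 2^-1) *
    expR (a * (ln n / 4) - (13 / 10) ^+ 2 * expR (ln n / 4)) / (13 / 10) ^+ (2 * r).
  rewrite /Mterm !gt0_powRE// expRD !natrM.
  rewrite (_ : (2 * l%:R + 1) / 2 = l%:R + 2^-1); last by field.
  rewrite (_ : 1 / 4 * ln n = ln n / 4); last by field.
  rewrite (_ : _ * ln n = a * (ln n / 4)); last by field.
  by field.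
rewrite MtermE ler_wpM2r ?invr_ge0 ?exprn_ge0// ler_wpM2l ?mulr_ge0 ?exprn_ge0 ?Gamma_ge0//.
rewrite ler_expR.
apply: le_trans (@linear_sub_expR_le _ a ((13 / 10) ^+ 2) _ _ m_gt0 _ ln_m_le_u) _.
  by rewrite a_ge0 Km /=; have := a_le; have := l_leR; nra.
by rewrite Km lerD2r ler_wpM2l.
Qed.

Lemma Gamma_expR_le0 : l = 0 -> Gamma (l%:R + 2^-1) * expR E <= 7 / 10.
Proof.
move=> l0; have N3 := N_ge3R.
have expR_E_le : expR E <= (6 * N%:R + 8)^-1.
  rewrite -[leRHS]lnK ?posrE ?invr_gt0; last lra.
  by rewrite lnV ?posrE ?ler_expR ?(exponent0_le l0)//; lra.
have X_ge : 26 <= 6 * N%:R + 8 :> R by lra.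
have : (6 * N%:R + 8)^-1 <= 26^-1 :> R by rewrite lef_pV2 ?posrE// (lt_le_trans _ X_ge).
move: expR_E_le; have := Gamma_half_le (R := R) l; have := Gamma_ge0 (l%:R + 2^-1 : R).
have := expR_ge0 E; rewrite l0 fact0 expr1; nra.
Qed.

Lemma Gamma_expR_le : (0 < l)%N ->
  (7 / 5) ^+ (2 * l) * Gamma (l%:R + 2^-1) * expR E <= (1 / 5) ^+ l.
Proof.
move=> l_gt0; have N3 := N_ge3R.
have fact_le : l`!%:R <= (2 * N%:R + 2) ^+ l :> R.
  rewrite -[2]/(2%:R) -natrM -natrD -natrX ler_nat; exact: fact_leq_expn.
have Gamma_le : Gamma (l%:R + 2^-1 : R) <= 4 * (4 * N%:R + 4) ^+ l.
  apply: le_trans (Gamma_half_le l) _.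
  have pow_ge2 : 2 <= 2 ^+ l :> R by rewrite -[leLHS]expr1 ler_eXn2l//; lra.
  have pf_ge2 : 2 <= 2 ^+ l * l`!%:R :> R.
    by rewrite -[leLHS]mulr1 ler_pM// ler1n fact_gt0.
  have := ler_wpM2l (exprn_ge0 l (ler0n R 2)) fact_le.
  have -> : 4 * N%:R + 4 = 2 * (2 * N%:R + 2) :> R by lra.
  rewrite exprMn exprS; nra.
have budget : 4 * (expR 2 * (6 * N%:R + 8)) ^+ l * expR E <= 1.
  have -> : (expR 2 * (6 * N%:R + 8)) ^+ l = expR (l%:R * (2 + L)).
    by rewrite expRM_natl (expRD 2) lnK// posrE; lra.
  apply: le_trans (_ : expR (3 / 2) * expR (l%:R * (2 + L)) * expR E <= _).
    by rewrite !ler_wpM2r ?expR_ge0 ?expR32_ge4.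
  rewrite -!expRD -[leRHS]expR0 ler_expR; have := exponent_le; lra.
have base : 49 / 25 * (4 * N%:R + 4) <= expR 2 * (6 * N%:R + 8) / 5 :> R.
  have : 0 <= (expR 2 - 98 / 15) * (6 * N%:R + 8) :> R.
    by apply: mulr_ge0; have := expR2_ge98_15 (R := R); lra.
  nra.
apply: le_trans (_ : 4 * (expR 2 * (6 * N%:R + 8) / 5) ^+ l * expR E <= _).
  rewrite ler_wpM2r ?expR_ge0// exprM [X in X ^+ l](_ : _ = 49 / 25); last first.
    by rewrite expr2; lra.
  apply: le_trans (ler_wpM2l (exprn_ge0 _ _) Gamma_le) _; first lra.
  rewrite mulrCA -exprMn ler_wpM2l//.
  by apply: lerXn2r; rewrite // nnegrE; lra.
rewrite exprMn mul1r; have : 0 <= 5^-1 ^+ l :> R by rewrite exprn_ge0.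
nra.
Qed.

End Mterm_bound.

Theorem lemma3p9 (R : realType) (N r l : nat) :
  (3 <= N)%N -> (r <= N + 1)%N -> (l <= 2 * N + 2)%N ->
  (@M R N (2 * r) (2 * l) <=
    (if (1 <= l)%N then (1 / 5) ^+ l / (13 / 10) ^+ (2 * r)
     else (7 / 10) / (13 / 10) ^+ (2 * r))%:E)%E.
Proof.
move=> N_ge3 r_le l_le; apply: ge_ereal_sup => _ [n /= nN_le_n <-].
rewrite lee_fin; apply: le_trans (Mterm_le_expR _ _ _ N_ge3 r_le l_le _ nN_le_n) _.
case: posnP => [l0|l_gt0]; rewrite ler_wpM2r ?invr_ge0 ?exprn_ge0//.
- by rewrite l0 expr0 mul1r; exact: Gamma_expR_le0.
- exact: Gamma_expR_le.
Qed.
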